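(* Let $p>1$ be an integer and let $u^{(p)}$ be the fixed point of the substitution $\varphi_p(L)=L^pS$, $\varphi_p(S)=M$, $\varphi_p(M)=L^{p-1}S$. If $MzM$ is a factor of $u^{(p)}$ with $|z|_M=0$, then $z=(L^pS)^p$, or $z=L^{p-1}S(L^pS)^p$, or $z=L^{p-1}S(L^pS)^{p-1}$. Consequently $p^2+p-1\le |z|\le p^2+2p$.
   Context: $u^{(p)}=\lim_{n\to\infty}\varphi_p^n(L)$. A factor is a finite contiguous subword; $|w|$ is the length and $|w|_a$ the number of occurrences of the letter $a$ in $w$; $w^k$ denotes $k$ concatenated copies of $w$. *)

From HB Require Import structures.
From mathcomp Require Import all_boot.
Set Implicit Arguments. Unset Strict Implicit. Unset Printing Implicit Defensive.

Inductive letter := L | S | M.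

Definition letter_eqb (a b : letter) : bool :=
  match a, b with L, L | S, S | M, M => true | _, _ => false end.
Lemma letter_eqP : Equality.axiom letter_eqb.
Proof. by case; case; constructor. Qed.
HB.instance Definition _ := hasDecEq.Build letter letter_eqP.

Definition wpow (w : seq letter) (k : nat) : seq letter := flatten (nseq k w).

Definition phi (p : nat) (a : letter) : seq letter :=
  match a with
  | L => rcons (nseq p L) S
  | S => [:: M]
  | M => rcons (nseq p.-1 L) S
  end.

Definition phiw (p : nat) (w : seq letter) : seq letter := flatten (map (phi p) w).

Definition phin (p n : nat) : seq letter := iter n (phiw p) [:: L].

(* w is a factor of u^(p) = lim_n phi_p^n(L): since phi_p(L) begins with L,
   the words phi_p^n(L) are successive prefixes of u^(p), so the factors of
   u^(p) are exactly the factors (infixes) of the words phi_p^n(L). *)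
Definition factor_u (p : nat) (w : seq letter) : Prop :=
  exists n, infix w (phin p n).

From mathcomp Require Import all_boot zify.

(* Every factor of u is a factor of phi^2(w) for some w = phi^n(L), and w
   avoids SS, LM and MM.  Under phi^2 the letter S becomes the M-free word
   L^(p-1)S, while L and M become (L^pS)^p M and (L^pS)^(p-1) M: each ends
   with its unique M.  Hence two consecutive M's of phi^2(w) close the image
   of a letter in {L, M}, and the word between them is the image of the next
   one or two letters, which by admissibility are L, SL or SM. *)

Section FirstOccurrence.
Context {T : eqType} {c : T}.

Lemma eq_cat_notin_prefix {B x t r : seq T} :
  c \notin B -> x ++ c :: t = B ++ r ->
  exists2 x', x = B ++ x' & x' ++ c :: t = r.
Proof.
elim: B x => [|b B IH] x; first by exists x.
case: x => [|a x] /=; first by move=> cNB [cb _]; rewrite cb inE eqxx in cNB.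
rewrite inE negb_or => /andP[_ cNB] [<- E].
by have [x' -> <-] := IH x cNB E; exists x'.
Qed.

Lemma eq_cat_cons_notin {B x t r : seq T} :
  c \notin B -> x ++ c :: t = B ++ c :: r ->
  x = B /\ t = r \/ exists2 x', x = B ++ c :: x' & x' ++ c :: t = r.
Proof.
move=> cNB /(eq_cat_notin_prefix cNB) [[|a x'] -> /=].
  by case=> ->; left; rewrite cats0.
by case=> -> <-; right; exists x'.
Qed.

Lemma first_occurrence_unique {B x t r : seq T} :
  c \notin x -> c \notin B -> x ++ c :: t = B ++ c :: r -> x = B.
Proof.
move=> cNx cNB /(eq_cat_cons_notin cNB) [[]//|[x' Ex _]].
by rewrite Ex mem_cat inE eqxx orbT in cNx.
Qed.

End FirstOccurrence.

Lemma phiw_cat p u v : phiw p (u ++ v) = phiw p u ++ phiw p v.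
Proof. by rewrite /phiw map_cat flatten_cat. Qed.

Lemma phiw_nseqL p k : phiw p (nseq k L) = wpow (phi p L) k.
Proof. by elim: k => // k IH; rewrite /phiw /= -/(phiw p _) IH. Qed.

Lemma size_wpow (w : seq letter) k : size (wpow w k) = k * size w.
Proof. by elim: k => //= k IH; rewrite size_cat IH mulSn. Qed.

Lemma notin_wpow (a : letter) w k : a \notin w -> a \notin wpow w k.
Proof. by move=> aNw; elim: k => //= k IH; rewrite mem_cat negb_or aNw. Qed.

Lemma M_notin_phi p a : a != S -> M \notin phi p a.
Proof. by case: a => // _; rewrite mem_rcons inE mem_nseq andbF. Qed.

Definition psi p a := phiw p (phi p a).

Lemma phiw2_cons p a w : phiw p (phiw p (a :: w)) = psi p a ++ phiw p (phiw p w).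
Proof. exact: phiw_cat. Qed.

Lemma psiL p : psi p L = wpow (phi p L) p ++ [:: M].
Proof. by rewrite /psi /phi -[in LHS]cats1 phiw_cat phiw_nseqL. Qed.

Lemma psiM p : psi p M = wpow (phi p L) p.-1 ++ [:: M].
Proof. by rewrite /psi /phi -[in LHS]cats1 phiw_cat phiw_nseqL. Qed.

Lemma psiS p : psi p S = phi p M.
Proof. by rewrite /psi /phiw /= cats0. Qed.

Definition admissible (a b : letter) : bool :=
  match a, b with S, S | L, M | M, M => false | _, _ => true end.

Lemma path_admissible_L_block n : path admissible L (rcons (nseq n L) S).
Proof. by elim: n. Qed.

Section PhiPreservesAdmissible.
Context {p : nat}.
Hypothesis p_gt1 : 1 < p.

Lemma sorted_phi a : sorted admissible (phi p a).
Proof.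
by case: p p_gt1 => [|[|k]] // _; case: a; rewrite /= ?path_admissible_L_block.
Qed.

Lemma path_phi a b : admissible a b ->
  path admissible (last M (phi p a)) (phi p b).
Proof.
case: p p_gt1 => [|[|k]] // _.
by case: a; case: b => //= _; rewrite ?last_rcons /= ?path_admissible_L_block.
Qed.

Lemma path_phiw a w : path admissible a w ->
  path admissible (last M (phi p a)) (phiw p w).
Proof.
elim: w a => //= b w IH a /andP[ab bw].
rewrite /phiw /= -/(phiw p w) cat_path path_phi //=.
by case: b {ab} bw => /IH; rewrite /= ?last_rcons.
Qed.

Lemma sorted_phiw w : sorted admissible w -> sorted admissible (phiw p w).
Proof.
case: w => //= a w aw; rewrite /phiw /= -/(phiw p w).
have := path_phiw a w aw; have := sorted_phi a.
by case: (phi p a) => [_ /path_sorted|h s /= hs]; rewrite //= cat_path hs.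
Qed.

Lemma sorted_phin n : sorted admissible (phin p n).
Proof. by elim: n => //= n IH; apply: sorted_phiw. Qed.

End PhiPreservesAdmissible.

Lemma psi_nonS p a : a != S -> exists2 P, psi p a = P ++ [:: M] & M \notin P.
Proof.
case: a => // _.
- by exists (wpow (phi p L) p); rewrite ?psiL // notin_wpow ?M_notin_phi.
- by exists (wpow (phi p L) p.-1); rewrite ?psiM // notin_wpow ?M_notin_phi.
Qed.

Lemma M_free_prefix_psiL p z t r : M \notin z ->
  z ++ M :: t = psi p L ++ r -> z = wpow (phi p L) p.
Proof.
rewrite psiL -catA => zNM; apply: first_occurrence_unique zNM _.
by rewrite notin_wpow ?M_notin_phi.
Qed.

Lemma M_free_prefix_psiM p z t r : M \notin z ->
  z ++ M :: t = psi p M ++ r -> z = wpow (phi p L) p.-1.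
Proof.
rewrite psiM -catA => zNM; apply: first_occurrence_unique zNM _.
by rewrite notin_wpow ?M_notin_phi.
Qed.

Definition return_word p z :=
  z = wpow (phi p L) p
  \/ z = phi p M ++ wpow (phi p L) p
  \/ z = phi p M ++ wpow (phi p L) p.-1.

Lemma return_word_after p a w z y : a != S -> path admissible a w -> M \notin z ->
  phiw p (phiw p w) = z ++ M :: y -> return_word p z.
Proof.
case: w => [|b w] aNS /=; first by case: z.
case/andP=> ab bw zNM; rewrite phiw2_cons => /esym E.
case: b ab bw E zNM => [_ _ E zNM|_ |]; last by case: a aNS.
  by left; apply: M_free_prefix_psiL zNM E.
rewrite psiS => bw /(eq_cat_notin_prefix (M_notin_phi p M isT)) [z' -> E].
rewrite mem_cat negb_or => /andP[_ z'NM].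
case: w bw E => [|c w] /=; first by case: z' {z'NM}.
rewrite phiw2_cons; case: c => // _ E; right; [left|right]; congr (_ ++ _).
- exact: M_free_prefix_psiL z'NM E.
- exact: M_free_prefix_psiM z'NM E.
Qed.

Lemma return_word_between p w x z y : sorted admissible w -> M \notin z ->
  phiw p (phiw p w) = x ++ M :: z ++ M :: y -> return_word p z.
Proof.
move=> + zNM; elim: w x => [|a w IH] x; first by case: x.
move=> /= aw; have {}IH := IH _ (path_sorted aw).
rewrite phiw2_cons => /esym E.
have [aS | aNS] := eqVneq a S.
  move: E; rewrite aS psiS.
  by move/(eq_cat_notin_prefix (M_notin_phi p M isT)) => [x' _ /esym/IH].
have [P EP PNM] := psi_nonS p a aNS; rewrite EP -catA in E.
case: (eq_cat_cons_notin PNM E) => [[_ /esym]|[x' _ /esym/IH //]].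
exact: return_word_after aNS aw zNM.
Qed.

Theorem mainTheorem5 (p : nat) (z : seq letter) :
  1 < p ->
  factor_u p ([:: M] ++ z ++ [:: M]) ->
  count_mem M z = 0 ->
  (z = wpow (rcons (nseq p L) S) p
   \/ z = rcons (nseq p.-1 L) S ++ wpow (rcons (nseq p L) S) p
   \/ z = rcons (nseq p.-1 L) S ++ wpow (rcons (nseq p L) S) p.-1)
  /\ (p ^ 2 + p - 1 <= size z <= p ^ 2 + 2 * p).
Proof.
move=> p_gt1 [n /infixP [x [y Exy]]] /count_memPn zNM.
have Zz : return_word p z.
  case: n Exy => [|[|n]] Exy.
  - by case: x Exy => [|? []].
  - have : M \notin phi p L ++ [::] by rewrite cats0 M_notin_phi.
    by rewrite -[_ ++ _]/(phin p 1) Exy !mem_cat inE eqxx /= orbT.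
  - apply: (return_word_between p _ x z y (sorted_phin p_gt1 n) zNM).
    by rewrite -[LHS]/(phin p n.+2) Exy /= -catA.
split; first exact: Zz.
case: Zz => [->|[->|->]]; rewrite ?size_cat size_wpow /= !size_rcons !size_nseq; nia.
Qed.
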